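(* A code $C\subseteq\mathbb{F}_q^n$ is degenerated if and only if $C^\perp$ is degenerated.
   Context: Codes are $\mathbb{F}_q$-linear subspaces of $\mathbb{F}_q^n$; $C^\perp$ is the dual with respect to $\langle\mathbf{u},\mathbf{v}\rangle=\sum_iu_iv_i$. The stabiliser of a code $H$ is $\mathrm{Stab}(H)=\{\mathbf{x}\in\mathbb{F}_q^n:\mathbf{x}*H\subseteq H\}$, where $*$ is the componentwise product. A code $H$ is degenerated if $\dim\mathrm{Stab}(H)>1$; equivalently (a known result), $H$ is a direct sum of nonzero subcodes with disjoint supports or every generator matrix of $H$ has a zero column. *)

(* Codes over a finite field F (= F_q) are F-subspaces
   ({vspace}) of the row space 'rV[F]_n = F^n. *)
From HB Require Import structures.
From mathcomp Require Import all_boot all_order all_algebra.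
Set Implicit Arguments. Unset Strict Implicit. Unset Printing Implicit Defensive.
Import GRing.Theory.
Local Open Scope ring_scope.

Section Codes.
Variables (F : finFieldType) (n : nat).

Definition dotv (u v : 'rV[F]_n) : F := \sum_(i < n) u 0 i * v 0 i.

Definition cmul (u v : 'rV[F]_n) : 'rV[F]_n := \row_(i < n) (u 0 i * v 0 i).

(* dual code C^perp = { x | <x,c> = 0 for all c in C } (as the span of
   this finite set, which is already a subspace) *)
Definition dual_code (C : {vspace 'rV[F]_n}) : {vspace 'rV[F]_n} :=
  <<[seq x <- enum 'rV[F]_n | [forall c : 'rV[F]_n, (c \in C) ==> (dotv x c == 0%R)]]>>%VS.

Definition stab (H : {vspace 'rV[F]_n}) : {vspace 'rV[F]_n} :=
  <<[seq x <- enum 'rV[F]_n | [forall c : 'rV[F]_n, (c \in H) ==> (cmul x c \in H)]]>>%VS.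

Definition degenerated (H : {vspace 'rV[F]_n}) : bool := (1 < \dim (stab H))%N.

End Codes.

(* For a fixed x, multiplication by x is self-adjoint for the standard form:
   <x * d, c> = <d, x * c>.  Hence if x * C is contained in C, then x * C^perp
   is orthogonal to C, i.e. contained in C^perp.  Applying this to C^perp and
   using C^perp^perp = C gives Stab(C) = Stab(C^perp), so the two stabilisers
   have the same dimension. *)
From mathcomp Require Import all_boot all_order all_algebra.
Set Implicit Arguments. Unset Strict Implicit. Unset Printing Implicit Defensive.
Import GRing.Theory.
Local Open Scope ring_scope.

Lemma kermx_trK (F : fieldType) m n (A : 'M[F]_(m, n)) :
  (kermx (kermx A^T)^T <= A)%MS.
Proof.
set K := kermx A^T.
have sub_AK : (A <= kermx K^T)%MS.
  by apply/sub_kermxP; rewrite -[A]trmxK -trmx_mul mulmx_ker trmx0.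
have /mxrank_leqif_sup[_ <-] := sub_AK.
rewrite mxrank_ker mxrank_tr mxrank_ker mxrank_tr subKn //.
exact: rank_leq_col.
Qed.

Section Codes.
Variables (F : finFieldType) (n : nat).
Implicit Types (C H : {vspace 'rV[F]_n}) (u v x y c d : 'rV[F]_n).

Lemma mem_span_filter (P : pred 'rV[F]_n) : submod_closed P ->
  forall x, (x \in <<[seq y <- enum 'rV[F]_n | P y]>>%VS) = P x.
Proof.
move=> [P0 linP] x; apply/idP/idP => [|Px]; last first.
  by apply: memv_span; rewrite mem_filter Px mem_enum.
set s := [seq y <- _ | _] => /(coord_span (X := in_tuple s)) ->.
have PD u v : P u -> P v -> P (u + v).
  by move=> Pu Pv; have := linP 1 u v Pu Pv; rewrite scale1r.
apply: (big_ind P) => // i _.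
have Psi : P s`_i by have := mem_nth 0 (ltn_ord i); rewrite mem_filter => /andP[].
by have := linP (coord (in_tuple s) i x) s`_i 0 Psi P0; rewrite addr0.
Qed.

Lemma dotv0l c : dotv 0 c = 0.
Proof. by rewrite /dotv big1 // => i _; rewrite mxE mul0r. Qed.

Lemma dotv_linearl (a : F) u v c :
  dotv (a *: u + v) c = a * dotv u c + dotv v c.
Proof.
rewrite /dotv mulr_sumr -big_split /=; apply: eq_bigr => i _.
by rewrite !mxE mulrDl mulrA.
Qed.

Lemma dotvC u v : dotv u v = dotv v u.
Proof. by apply: eq_bigr => i _; rewrite mulrC. Qed.

Lemma cmul0 c : cmul 0 c = 0.
Proof. by apply/rowP => i; rewrite !mxE mul0r. Qed.

Lemma cmul_linearl (a : F) u v c :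
  cmul (a *: u + v) c = a *: cmul u c + cmul v c.
Proof. by apply/rowP => i; rewrite !mxE mulrDl mulrA. Qed.

Lemma dotv_cmul x c d : dotv (cmul x d) c = dotv d (cmul x c).
Proof. by apply: eq_bigr => i _; rewrite !mxE mulrA [x 0 i * _]mulrC. Qed.

Lemma dotv_mul_tr y m (A : 'M[F]_(m, n)) j : (y *m A^T) 0 j = dotv y (row j A).
Proof. by rewrite !mxE; apply: eq_bigr => i _; rewrite !mxE. Qed.

Lemma dual_codeP C x :
  reflect (forall c, c \in C -> dotv x c = 0) (x \in dual_code C).
Proof.
rewrite mem_span_filter; last first.
  split=> [|a u v /forallP Du /forallP Dv]; apply/forallP => c; apply/implyP.
    by rewrite /= dotv0l.
  move=> Cc; rewrite dotv_linearl (eqP (implyP (Du c) Cc)) mulr0 add0r.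
  exact: (implyP (Dv c) Cc).
apply: (iffP forallP) => [D c Cc | D c]; first exact/eqP/(implyP (D c)).
by apply/implyP => /D ->.
Qed.

Lemma stabP H x : reflect (forall c, c \in H -> cmul x c \in H) (x \in stab H).
Proof.
rewrite mem_span_filter; last first.
  split=> [|a u v /forallP Su /forallP Sv]; apply/forallP => c; apply/implyP.
    by rewrite /= cmul0 mem0v.
  move=> Hc; rewrite cmul_linearl memvD ?memvZ //.
  - exact: (implyP (Su c) Hc).
  - exact: (implyP (Sv c) Hc).
apply: (iffP forallP) => [S c Hc | S c]; first exact: (implyP (S c)).
by apply/implyP => /S.
Qed.

(* Every codeword of C occurs as a row (the other rows are zero), so the row
   space of [code_mx C] is C. *)
Definition code_mx C : 'M[F]_(#|{: 'rV[F]_n}|, n) :=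
  \matrix_(i < #|{: 'rV[F]_n}|) (if enum_val i \in C then enum_val i else 0).

Lemma row_code_mx C c : c \in C -> row (enum_rank c) (code_mx C) = c.
Proof. by move=> Cc; rewrite rowK enum_rankK Cc. Qed.

Lemma sub_code_mx C y : (y <= code_mx C)%MS -> y \in C.
Proof.
case/submxP => u ->; rewrite mulmx_sum_row; apply: memv_suml => i _.
by apply: memvZ; rewrite rowK; case: ifP => // _; apply: mem0v.
Qed.

Lemma dual_codeK C : dual_code (dual_code C) = C.
Proof.
apply/vspaceP => y; apply/idP/idP => [/dual_codeP Dy | Cy]; last first.
  by apply/dual_codeP => d /dual_codeP Dd; rewrite dotvC Dd.
set K := kermx (code_mx C)^T.
have dual_rowK i : row i K \in dual_code C.
  apply/dual_codeP => c /row_code_mx <-.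
  by rewrite -dotv_mul_tr -row_mul mulmx_ker !mxE.
apply/sub_code_mx; apply: submx_trans (kermx_trK (code_mx C)).
by apply/sub_kermxP/rowP => j; rewrite dotv_mul_tr Dy // mxE.
Qed.

Lemma stab_sub_dual C : (stab C <= stab (dual_code C))%VS.
Proof.
apply/subvP => x /stabP Sx; apply/stabP => d /dual_codeP Dd.
apply/dual_codeP => c Cc.
by rewrite dotv_cmul Dd ?Sx.
Qed.

Lemma stab_dual_code C : stab (dual_code C) = stab C.
Proof.
apply/eqP; rewrite eqEsubv stab_sub_dual andbT.
by rewrite -[in X in (_ <= X)%VS](dual_codeK C) stab_sub_dual.
Qed.

End Codes.

Theorem lemma6p6 (F : finFieldType) (n : nat) (C : {vspace 'rV[F]_n}) :
  degenerated C <-> degenerated (dual_code C).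
Proof. by rewrite /degenerated stab_dual_code. Qed.
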